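(* Let $n\ge 1$ and let $A\subseteq \mathbb{F}_3^n$ be a set such that the equation $a+b+c=0$ with $a,b,c\in A$ has no solutions except the trivial ones $a=b=c$. Then $$|A|\le 3\sum_{k=0}^{\lfloor 2n/3\rfloor}\binom{n}{k}_2 .$$
   Context: $\mathbb{F}_3=\{0,1,2\}$ is the field of integers modulo $3$. For integers $n\ge 0$ and $k$, the trinomial coefficient $\binom{n}{k}_2$ is defined as the coefficient of $x^k$ in $(1+x+x^2)^n$. *)

From HB Require Import structures.
From mathcomp Require Import all_boot all_order all_algebra.
Set Implicit Arguments. Unset Strict Implicit. Unset Printing Implicit Defensive.
Import GRing.Theory Num.Theory.
Local Open Scope ring_scope.

(* Trinomial coefficient binom(n,k)_2 := coefficient of x^k in (1+x+x^2)^n,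
   computed in {poly int}. *)
Definition trinom (n k : nat) : int :=
  ((1 + 'X + 'X^2 : {poly int}) ^+ n)`_k.

From HB Require Import structures.
From mathcomp Require Import all_boot all_order all_algebra.
From mathcomp Require Import ring zify.
Import GRing.Theory Num.Theory.
Set Implicit Arguments. Unset Strict Implicit. Unset Printing Implicit Defensive.
Local Open Scope ring_scope.

(* Tao's slice-rank form of the Ellenberg-Gijswijt argument.  Over F_3 the
   indicator of x + y + z = 0 on F_3^n is prod_i (1 - (x_i + y_i + z_i)^2),
   a sum of monomials x^alpha y^beta z^gamma with reduced exponents and total
   degree at most 2n; in each of them one of alpha, beta, gamma has degree at
   most k = 2n/3.  Restricted to a cap set A this function is "diagonal".
   Pick w on A annihilating every monomial of degree <= k, with support of
   size at least |A| - D, where D counts these monomials.  Contracting the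
   third variable with w kills the terms with deg gamma <= k and leaves
   diag(w) as the sum of two matrices of rank <= D, so |A| - D <= 2D.
   Finally D is the sum of the trinomial coefficients up to k. *)

Lemma mxrank_sum_le (R : fieldType) (I : finType) (P : pred I) m n
    (B : I -> 'M[R]_(m, n)) :
  (\rank (\sum_(i | P i) B i)%R <= \sum_(i | P i) \rank (B i))%N.
Proof.
elim/big_ind2: _ => [|A1 r1 A2 r2 h1 h2|i _] //; first by rewrite mxrank0.
exact: leq_trans (mxrank_add _ _) (leq_add h1 h2).
Qed.

Lemma mxrank_factor_le_card (R : fieldType) (K I : finType) m n (D : {set K})
    (Q : pred I) (p : I -> K) (u : K -> 'I_m -> R) (h : I -> 'I_n -> R) :
  (forall f, Q f -> p f \in D) ->
  (\rank (\matrix_(i, j) \sum_(f | Q f) u (p f) i * h f j)%R <= #|D|)%N.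
Proof.
move=> QD.
have -> : \matrix_(i, j) \sum_(f | Q f) u (p f) i * h f j =
    (\sum_(e in D) (\col_i u e i) *m (\row_j \sum_(f | Q f && (p f == e)) h f j))%R.
  apply/matrixP => i j; rewrite !mxE summxE (partition_big p (mem D)) //=.
  apply: eq_bigr => e _; rewrite !mxE big_ord1 !mxE mulr_sumr.
  by apply: eq_bigr => f /andP[_ /eqP->].
apply: leq_trans (mxrank_sum_le _ _) _; rewrite -sum1_card; apply: leq_sum => e _.
exact: leq_trans (mxrankM_maxl _ _) (rank_leq_col _).
Qed.

(* A subspace of dimension r contains a vector with at least r nonzero
   coordinates: take the vector of the row space that equals 1 on r coordinates
   where a basis of the row space is invertible. *)
Lemma exists_submx_rank_diag (R : fieldType) m n (K : 'M[R]_(m, n)) :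
  exists2 w : 'rV[R]_n, (w <= K)%MS & (\rank K <= \rank (diag_mx w))%N.
Proof.
set B := row_base K.
have rankB : \rank B = \rank K by rewrite /B (eq_row_base K).
have fullBt : row_full B^T by rewrite /row_full mxrank_tr rankB.
set f := fullrankfun fullBt.
have injf : injective f by apply: fullrankfun_inj.
set S := rowsub f B^T.
have unitSt : S^T \in unitmx by rewrite unitmx_tr fullrowsub_unit.
set x := (const_mx 1 : 'rV[R]_(\rank K)) *m invmx S^T.
exists (x *m B); first by rewrite (submx_trans (submxMl _ _)) // (eq_row_base K).
have xB_f i : (x *m B) 0 (f i) = 1.
  have : (x *m S^T) 0 i = 1 by rewrite /x -mulmxA mulVmx // mulmx1 mxE.
  by rewrite !mxE => <-; apply: eq_bigr => l _; rewrite !mxE.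
set P := rowsub f (1%:M : 'M[R]_n).
have compress : P *m diag_mx (x *m B) *m P^T = 1%:M.
  apply/matrixP => i j; rewrite mul_mx_diag !mxE.
  rewrite (bigD1 (f i)) //= big1 ?addr0; last first.
    by move=> l /negbTE nl; rewrite !mxE eq_sym nl !mul0r.
  rewrite !mxE eqxx mul1r.
  by have := xB_f i; rewrite mxE => ->; rewrite mul1r (inj_eq injf) eq_sym.
apply: (@leq_trans (\rank (P *m diag_mx (x *m B) *m P^T))).
  by rewrite compress mxrank1.
exact: leq_trans (mxrankM_maxl _ _) (mxrankM_maxr _ _).
Qed.

Notation F := 'F_3.
Definition Exp3 := ('I_3 * 'I_3 * 'I_3)%type.

(* The coefficient of a^t1 b^t2 c^t3 in 1 - (a + b + c)^2. *)
Definition ind_coef (t : Exp3) : F :=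
  match val t.1.1, val t.1.2, val t.2 with
  | 0, 0, 0 => 1
  | 2, 0, 0 | 0, 2, 0 | 0, 0, 2 => -1
  | 1, 1, 0 | 1, 0, 1 | 0, 1, 1 => -2
  | _, _, _ => 0 end.

Lemma ind_coef_deg (t : Exp3) :
  ind_coef t != 0 -> (t.1.1 + t.1.2 + t.2 <= 2)%N.
Proof. by case: t => [[[[|[|[|?]]] ?] [[|[|[|?]]] ?]] [[|[|[|?]]] ?]]. Qed.

Lemma F3_add3 (x : F) : x + x + x = 0.
Proof. by case: x => [[|[|[|?]]] ?] //; apply/val_inj. Qed.

Lemma F3_eq0_expand (a b c : F) :
  ((a + b + c == 0)%:R : F) =
  \sum_(t : Exp3) ind_coef t * a ^+ t.1.1 * b ^+ t.1.2 * c ^+ t.2.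
Proof.
have -> : ((a + b + c == 0)%:R : F) = 1 - (a + b + c) ^+ 2.
  by case: (a + b + c) => [[|[|[|?]]] ?] //; apply/val_inj.
rewrite -(pair_bigA _ (fun (t12 : 'I_3 * 'I_3) (t3 : 'I_3) =>
  ind_coef (t12, t3) * a ^+ t12.1 * b ^+ t12.2 * c ^+ t3)) /=.
rewrite -(pair_bigA _ (fun (t1 t2 : 'I_3) =>
  \sum_(t3 < 3) ind_coef (t1, t2, t3) * a ^+ t1 * b ^+ t2 * c ^+ t3)) /=.
by rewrite !big_ord_recr !big_ord0 /= /ind_coef /= !expr0 !expr1; ring.
Qed.

Notation Mon n := {ffun 'I_n -> 'I_3}.

Definition deg n (e : Mon n) : nat := (\sum_i (e i : nat))%N.
Definition monE n (x : 'rV[F]_n) (e : Mon n) : F := \prod_i x 0 i ^+ e i.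

Section Expansion.
Variable n : nat.
Implicit Types (f : {ffun 'I_n -> Exp3}) (x y z : 'rV[F]_n).

Definition alpha f : Mon n := [ffun i => (f i).1.1].
Definition beta f : Mon n := [ffun i => (f i).1.2].
Definition gamma f : Mon n := [ffun i => (f i).2].
Definition coefF f : F := \prod_i ind_coef (f i).

Lemma eq0_row_prod x : \prod_i ((x 0 i == 0)%:R : F) = (x == 0)%:R.
Proof.
have [->|/eqP nz] := eqVneq x 0; first by apply: big1 => i _; rewrite mxE.
have [i xi_nz] : exists i, x 0 i != 0.
  apply/existsP; apply: contra_notT nz => /existsPn x0; apply/rowP => i.
  by rewrite mxE; apply/eqP; move: (x0 i); rewrite negbK.
by rewrite (bigD1 i) //= (negbTE xi_nz) mul0r.
Qed.

Lemma eq0_row_expand x y z :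
  ((x + y + z == 0)%:R : F) =
  \sum_f coefF f * monE x (alpha f) * monE y (beta f) * monE z (gamma f).
Proof.
rewrite -eq0_row_prod.
under eq_bigr => i _ do rewrite !mxE F3_eq0_expand.
rewrite bigA_distr_bigA; apply: eq_bigr => f _.
rewrite /coefF /monE !big_split /=.
by congr (_ * _ * _ * _); apply: eq_bigr => i _; rewrite ffunE.
Qed.

Lemma deg_alpha_beta_gamma f : coefF f != 0 ->
  (deg (alpha f) + deg (beta f) + deg (gamma f) <= 2 * n)%N.
Proof.
move=> coef_nz.
have nz i : ind_coef (f i) != 0.
  by apply: contra coef_nz => /eqP fi0; rewrite /coefF (bigD1 i) //= fi0 mul0r.
rewrite /deg -!big_split /=.
apply: (@leq_trans (\sum_(i < n) 2)%N); last by rewrite sum_nat_const card_ord mulnC.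
by apply: leq_sum => i _; rewrite !ffunE ind_coef_deg.
Qed.

End Expansion.

Lemma trinomial_pow (n : nat) :
  (1 + 'X + 'X^2 : {poly int}) ^+ n = \sum_(e : Mon n) 'X^(deg e).
Proof.
have -> : (1 + 'X + 'X^2 : {poly int}) = \sum_(t < 3) 'X^t.
  by rewrite !big_ord_recr big_ord0 /= add0r expr0 expr1.
rewrite -[n in LHS]card_ord -prodr_const bigA_distr_bigA.
by apply: eq_bigr => e _; rewrite /deg prodrXr.
Qed.

Lemma sum_ord_eq_nat (d m : nat) :
  \sum_(j < m) ((d == j :> nat)%:R : int) = (d < m)%:R.
Proof.
elim: m => [|m IHm]; first by rewrite big_ord0.
rewrite big_ord_recr /= IHm ltnS [(d <= m)%N]leq_eqVlt.
by case: (ltngtP d m) => //= ->; rewrite ?addr0 ?add0r.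
Qed.

Lemma sum_trinom_card_deg_le (n k : nat) :
  \sum_(0 <= j < k.+1) trinom n j = #|[set e : Mon n | (deg e <= k)%N]|%:Z.
Proof.
rewrite big_mkord.
under eq_bigr => j _ do rewrite /trinom trinomial_pow coef_sum.
rewrite exchange_big /=.
under eq_bigr => e _ do under eq_bigr => j _ do rewrite coefXn eq_sym.
under eq_bigr => e _ do rewrite sum_ord_eq_nat ltnS.
rewrite -natz -sum1_card natr_sum big_mkcond /= [RHS]big_mkcond.
by apply: eq_bigr => e _; rewrite inE; case: ifP.
Qed.

Section CapSetRank.
Variables (n N k : nat) (a : 'I_N -> 'rV[F]_n).
Hypothesis a_capfree : forall i j l, (a i + a j + a l == 0) = (i == j) && (j == l).
Hypothesis k_third : (2 * n <= 3 * k + 2)%N.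

Let D := [set e : Mon n | (deg e <= k)%N].

Variable w : 'rV[F]_N.
Hypothesis w_orth : forall e, e \in D -> \sum_l w 0 l * monE (a l) e = 0.

Let contract (f : {ffun 'I_n -> Exp3}) := \sum_l w 0 l * monE (a l) (gamma f).

Lemma diag_mx_expand : diag_mx w = \matrix_(i, j)
  \sum_f coefF f * monE (a i) (alpha f) * monE (a j) (beta f) * contract f.
Proof.
apply/matrixP => i j; rewrite !mxE.
transitivity (\sum_l w 0 l * ((a i + a j + a l == 0)%:R : F)).
  rewrite (bigD1 j) //= big1 => [|l nlj]; last first.
    by rewrite a_capfree [j == l]eq_sym (negbTE nlj) andbF mulr0.
  by rewrite a_capfree eqxx andbT addr0; case: eqP => [->|_]; rewrite ?mulr1 ?mulr0.
under eq_bigr => l _ do rewrite eq0_row_expand mulr_sumr.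
rewrite exchange_big /=; apply: eq_bigr => f _.
by rewrite /contract !mulr_sumr; apply: eq_bigr => l _; ring.
Qed.

Lemma contract_term_eq0 f :
  ~~ (deg (alpha f) <= k)%N -> ~~ (deg (beta f) <= k)%N ->
  coefF f * contract f = 0.
Proof.
move=> big_alpha big_beta; have [->|nz] := eqVneq (coefF f) 0; first by rewrite mul0r.
rewrite /contract w_orth ?mulr0 // inE.
move: (deg_alpha_beta_gamma nz) big_alpha big_beta; rewrite -!ltnNge; lia.
Qed.

Lemma rank_diag_orth_le : (\rank (diag_mx w) <= 2 * #|D|)%N.
Proof.
pose low_alpha (f : {ffun 'I_n -> Exp3}) := (deg (alpha f) <= k)%N.
pose low_beta (f : {ffun 'I_n -> Exp3}) := ~~ low_alpha f && (deg (beta f) <= k)%N.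
pose M1 := \matrix_(i, j) \sum_(f | low_alpha f) monE (a i) (alpha f) *
  (coefF f * monE (a j) (beta f) * contract f).
pose M2 := \matrix_(i, j) \sum_(f | low_beta f) monE (a i) (beta f) *
  (coefF f * monE (a j) (alpha f) * contract f).
have split_diag : diag_mx w = M1 + M2^T.
  rewrite diag_mx_expand; apply/matrixP => i j; rewrite !mxE.
  rewrite [LHS](bigID low_alpha) [X in _ + X = _](bigID (fun f => deg (beta f) <= k)%N) /=.
  rewrite [X in _ + (_ + X) = _]big1 ?addr0 => [|f /andP[ba bb]]; last first.
    have reorder (c x y t : F) : c * x * y * t = x * y * (c * t) by ring.
    by rewrite reorder contract_term_eq0 ?mulr0.
  by congr (_ + _); apply: eq_big => [f //|f _]; ring.
rewrite split_diag mul2n -addnn; apply: leq_trans (mxrank_add _ _) (leq_add _ _).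
  apply: (@mxrank_factor_le_card _ _ _ _ _ D low_alpha (@alpha n) (fun e i => monE (a i) e)
    (fun f j => coefF f * monE (a j) (beta f) * contract f)) => f.
  by rewrite inE.
rewrite mxrank_tr.
apply: (@mxrank_factor_le_card _ _ _ _ _ D low_beta (@beta n) (fun e i => monE (a i) e)
  (fun f j => coefF f * monE (a j) (alpha f) * contract f)) => f /andP[_].
by rewrite inE.
Qed.

End CapSetRank.

Lemma capfree_card_le (n : nat) (A : {set 'rV[F]_n}) :
  (forall a b c, a \in A -> b \in A -> c \in A -> a + b + c = 0 ->
     a = b /\ b = c) ->
  (#|A| <= 3 * #|[set e : Mon n | (deg e <= (2 * n) %/ 3)%N]|)%N.
Proof.
move=> capA; set k := ((2 * n) %/ 3)%N; set D := [set e : Mon n | (deg e <= k)%N].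
pose a (i : 'I_#|A|) : 'rV[F]_n := enum_val i.
have a_capfree i j l : (a i + a j + a l == 0) = (i == j) && (j == l).
  apply/eqP/andP => [sum0|[/eqP <- /eqP <-]]; last by apply/rowP => c; rewrite !mxE F3_add3.
  by case: (capA _ _ _ (enum_valP i) (enum_valP j) (enum_valP l) sum0) =>
    /enum_val_inj -> /enum_val_inj ->.
pose C : 'M[F]_(#|A|, #|D|) := \matrix_(l, j) monE (a l) (enum_val j).
have [w w_ker rank_w] := exists_submx_rank_diag (kermx C).
have w_orth e : e \in D -> \sum_l w 0 l * monE (a l) e = 0.
  move=> De; have /eqP wC0 : (w *m C == 0) by rewrite -sub_kermx.
  transitivity ((w *m C) 0 (enum_rank_in De e)); last by rewrite wC0 mxE.
  by rewrite mxE; apply: eq_bigr => l _; rewrite mxE enum_rankK_in.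
have k_third : (2 * n <= 3 * k + 2)%N.
  by have := divn_eq (2 * n) 3; have := ltn_pmod (2 * n) (isT : 0 < 3)%N; lia.
move: rank_w; rewrite mxrank_ker leq_subLR => /leq_trans-> //.
by rewrite mulSn leq_add ?rank_leq_col ?(rank_diag_orth_le a_capfree k_third w_orth).
Qed.

Theorem mainTheorem1 (n : nat) (A : {set 'rV['F_3]_n}) :
  (1 <= n)%N ->
  (forall a b c, a \in A -> b \in A -> c \in A -> a + b + c = 0 ->
     a = b /\ b = c) ->
  (#|A|%:Z <= 3 * \sum_(0 <= k < ((2 * n) %/ 3).+1) trinom n k)%R.
Proof.
move=> _ capA.
by rewrite sum_trinom_card_deg_le -PoszM lez_nat capfree_card_le.
Qed.
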